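(* Let $F$ and $\hat F$ be distribution functions on $\mathbb R$ with finite second moments, and for $t\in\mathbb R$ let $\gamma(t)=1-F(t)$ and $\hat\gamma(t)=1-\hat F(t)$ be the p-values of the statistic value $t$ computed under $F$ and $\hat F$, respectively. Let $\phi(\xi)=\sup_{z\in\mathbb R}\big(F(z+\xi)-F(z)\big)$. Then for every $t\in\mathbb R$, $$|\hat\gamma(t)-\gamma(t)|\le d_2(\hat F,F)^{2/3}+\phi\big(d_2(\hat F,F)^{2/3}\big).$$
   Context: $d_2(\hat F,F)$ denotes the Wasserstein-2 distance between the distributions with CDFs $\hat F$ and $F$. *)

From HB Require Import structures.
From mathcomp Require Import all_boot all_order all_algebra.
From mathcomp Require Import all_classical all_reals all_analysis.
Set Implicit Arguments. Unset Strict Implicit. Unset Printing Implicit Defensive.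
Import Order.TTheory GRing.Theory Num.Theory.
Import numFieldNormedType.Exports.
Local Open Scope classical_set_scope.
Local Open Scope ring_scope.

(* A distribution on R is represented by a Borel probability measure mu;
   its distribution function is F(t) = mu(]-oo, t]). *)
Definition distfun (R : realType) (mu : probability R R) (t : R) : R :=
  fine (mu [set x | x <= t]).

Definition finite_second_moment (R : realType) (mu : probability R R) : Prop :=
  (\int[mu]_x ((x ^+ 2)%:E) < +oo)%E.

Definition coupling (R : realType) (mu nu : probability R R)
  (pi : probability (R * R)%type R) : Prop :=
  (forall A : set R, measurable A -> pi (fst @^-1` A) = mu A) /\
  (forall A : set R, measurable A -> pi (snd @^-1` A) = nu A).

Definition W2sq (R : realType) (mu nu : probability R R) : \bar R :=
  ereal_inf [set (\int[pi]_z (((z.1 - z.2) ^+ 2)%:E))%E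
            | pi in [set pi | coupling mu nu pi]].

Definition d2 (R : realType) (mu nu : probability R R) : R :=
  Num.sqrt (fine (W2sq mu nu)).

Definition modulus (R : realType) (F : R -> R) (xi : R) : R :=
  sup [set F (z + xi) - F z | z in [set: R]].

From HB Require Import structures.
From mathcomp Require Import all_boot all_order all_algebra.
From mathcomp Require Import all_classical all_reals all_analysis.
From mathcomp Require Import measurable_realfun.
From mathcomp Require Import ring lra.
Import Order.TTheory GRing.Theory Num.Theory.
Import numFieldNormedType.Exports.
Local Open Scope classical_set_scope.
Local Open Scope ring_scope.

(* Let (X, Y) be any coupling of muhat and mu and e > 0.  If X <= a and
   Y > a + e then |X - Y| >= e, so Chebyshev's inequality gives
     e^2 (Fhat a - F (a + e)) <= E (X - Y)^2,
   and symmetrically with the roles of X and Y exchanged.  Taking the infimum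
   over couplings replaces E (X - Y)^2 by d^2.  The choice e = d^(2/3) makes
   d^2 / e^2 = e, and F (t + e) - F t and F t - F (t - e) are at most phi(e).
   When d = 0, letting e -> 0+ and using the right-continuity of distribution
   functions gives Fhat t = F t. *)

Section marginal.
Context {d1 d2} {T1 : measurableType d1} {T2 : measurableType d2} {R : realType}.
Context (pi : {measure set (T1 * T2)%type -> \bar R}).
Local Open Scope ereal_scope.

Lemma ge0_integral_fst_marginal {P : {measure set T1 -> \bar R}} {f : T1 -> \bar R} :
  (forall A, measurable A -> pi (fst @^-1` A) = P A) ->
  measurable_fun [set: T1] f -> (forall x, 0 <= f x) ->
  \int[pi]_z f z.1 = \int[P]_x f x.
Proof.
move=> piP mf f0.
rewrite [RHS](@eq_measure_integral _ _ _ _ (pushforward pi fst)); last first.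
  by move=> A mA _; rewrite -piP.
by rewrite (ge0_integral_pushforward measurable_fst)// preimage_setT.
Qed.

Lemma ge0_integral_snd_marginal {Q : {measure set T2 -> \bar R}} {f : T2 -> \bar R} :
  (forall A, measurable A -> pi (snd @^-1` A) = Q A) ->
  measurable_fun [set: T2] f -> (forall x, 0 <= f x) ->
  \int[pi]_z f z.2 = \int[Q]_x f x.
Proof.
move=> piQ mf f0.
rewrite [RHS](@eq_measure_integral _ _ _ _ (pushforward pi snd)); last first.
  by move=> A mA _; rewrite -piQ.
by rewrite (ge0_integral_pushforward measurable_snd)// preimage_setT.
Qed.

End marginal.

Section shift_bound.
Context {d} {T : measurableType d} {R : realType} (mu : {measure set T -> \bar R}).
Local Open Scope ereal_scope.

Lemma measurable_sublevel (X : T -> R) (a : R) :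
  measurable_fun [set: T] X -> measurable [set x | X x <= a]%R.
Proof.
move=> mX; rewrite -[X in measurable X]setTI.
by apply: measurable_fun_le => //; exact: measurable_cst.
Qed.

Lemma markov_sqr (Z : T -> R) (e : R) : measurable_fun [set: T] Z -> (0 < e)%R ->
  (e ^+ 2)%:E * mu [set x | e <= `|Z x|]%R <= \int[mu]_x (Z x ^+ 2)%:E.
Proof.
move=> mZ e0.
have er_sqr_nd :
    {in `[0, +oo[%classic &, {homo er_map (fun r : R => r ^+ 2)%R : x y / x <= y}}.
  move=> [x| |] [y| |]; rewrite !inE/= !in_itv/= ?andbT ?lee_fin ?leey// => x0 y0 xy.
  by rewrite ler_sqr.
have er_sqr_ge0 r : 0 <= r -> 0 <= er_map (fun r : R => r ^+ 2)%R r.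
  by case: r => //= r _; rewrite lee_fin sqr_ge0.
have := @le_integral_comp_abse _ _ _ mu _ measurableT (EFin \o Z) e _
  (@measurable_er_map _ T _ _ (exprn_measurable 2)) er_sqr_ge0 er_sqr_nd
  (proj2 (measurable_EFinP _ _) mZ) e0.
rewrite setTI /=.
have -> : [set x | e%:E <= `|(Z x)%:E|] = [set x | e <= `|Z x|]%R.
  by apply/seteqP; split => x /=; rewrite lee_fin.
under eq_integral do rewrite real_normK ?num_real//.
by [].
Qed.

Lemma measure_le_shift {X Y : T -> R} (a e : R) :
  measurable_fun [set: T] X -> measurable_fun [set: T] Y -> (0 < e)%R ->
  (e ^+ 2)%:E * mu [set x | X x <= a]%R <=
  (e ^+ 2)%:E * mu [set x | Y x <= a + e]%R + \int[mu]_x ((X x - Y x) ^+ 2)%:E.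
Proof.
move=> mX mY e0.
have mXY : measurable_fun [set: T] (X \- Y)%R by exact: measurable_funB.
have mfar : measurable [set x | e <= `|X x - Y x|]%R.
  rewrite -[X in measurable X]setTI.
  by apply: (measurable_fun_le (f := cst e)) => //; exact: measurableT_comp.
have cover : [set x | X x <= a]%R `<=`
             [set x | Y x <= a + e]%R `|` [set x | e <= `|X x - Y x|]%R.
  move=> x /= Xa; have [Ye|eY] := leP (Y x) (a + e)%R; [by left | right].
  by rewrite distrC ger0_norm; lra.
apply: le_trans (_ : (e ^+ 2)%:E * (mu [set x | Y x <= a + e]%R +
                     mu [set x | e <= `|X x - Y x|]%R) <= _).
  rewrite lee_pmul2l ?lte_fin ?exprn_gt0//.
  apply: le_trans (measureU2 _ _ _) => //; last exact: measurable_sublevel.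
  by apply: le_measure; rewrite ?inE//; [exact: measurable_sublevel |
    apply: measurableU => //; exact: measurable_sublevel].
rewrite ge0_muleDr// leeD2l//; exact: markov_sqr.
Qed.

End shift_bound.

Section distribution_function.
Context {R : realType} (mu : probability R R).

Lemma measurable_le_halfline (a : R) : measurable [set x : R | x <= a].
Proof.
rewrite (_ : [set x | x <= a] = `]-oo, a]%classic); first exact: measurable_itv.
by apply/seteqP; split => x /=; rewrite in_itv.
Qed.

Lemma distfunE (a : R) : (distfun mu a)%:E = mu [set x | x <= a].
Proof. by rewrite fineK// fin_num_measure//; exact: measurable_le_halfline. Qed.

Lemma distfun_ge0 (a : R) : 0 <= distfun mu a.
Proof. by rewrite -lee_fin distfunE. Qed.

Lemma distfun_le1 (a : R) : distfun mu a <= 1.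
Proof.
by rewrite -lee_fin distfunE probability_le1//; exact: measurable_le_halfline.
Qed.

Let idTR : R -> R := idfun.

#[local] HB.instance Definition _ :=
  @isMeasurableFun.Build _ _ _ _ idTR (@measurable_id _ _ setT).

Lemma distfun_right_continuous : right_continuous (distfun mu).
Proof.
have cdfE : distfun mu = fine \o cdf (idTR : {RV mu >-> R}).
  apply/funext => b /=; rewrite /distfun /cdf /distribution /pushforward.
  by congr (fine (mu _)); apply/seteqP; split => x /=; rewrite in_itv.
move=> a; rewrite cdfE; apply: fine_cvg.
by rewrite fineK ?fin_num_measure//; exact: cdf_right_continuous.
Qed.

End distribution_function.

Lemma le_right_continuous {R : realType} {f : R -> R} {t x : R} :
  f s @[s --> t^'+] --> f t -> (forall e, 0 < e -> x <= f (t + e)) -> x <= f t.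
Proof.
move=> ft xf; rewrite -(cvg_lim _ ft)//.
apply: limr_ge; first by apply/cvg_ex; exists (f t).
near=> s; rewrite -(subrKC t s); apply: xf; rewrite subr_gt0.
by near: s; exact: nbhs_right_gt.
Unshelve. all: by end_near.
Qed.

Section law.
Context {d} {T : measurableType d} {R : realType} (P : {measure set T -> \bar R}).
Local Open Scope ereal_scope.

Lemma distfun_law {X : T -> R} {mu : probability R R} (a : R) :
  (forall A, measurable A -> P (X @^-1` A) = mu A) ->
  P [set x | X x <= a]%R = (distfun mu a)%:E.
Proof. by move=> Xmu; rewrite distfunE -Xmu//; exact: measurable_le_halfline. Qed.

Lemma distfun_sub_shift_le (X Y : T -> R) (mu nu : probability R R) (a e : R) :
  measurable_fun [set: T] X -> measurable_fun [set: T] Y ->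
  (forall A, measurable A -> P (X @^-1` A) = mu A) ->
  (forall A, measurable A -> P (Y @^-1` A) = nu A) -> (0 < e)%R ->
  (e ^+ 2 * (distfun mu a - distfun nu (a + e)))%:E <= \int[P]_x ((X x - Y x) ^+ 2)%:E.
Proof.
move=> mX mY Xmu Ynu e0.
have := measure_le_shift P a e mX mY e0.
rewrite (distfun_law a Xmu) (distfun_law (a + e) Ynu) -!EFinM.
by rewrite mulrBr EFinB leeBlDl.
Qed.

End law.

Section wasserstein.
Context {R : realType}.
Local Open Scope ereal_scope.
Implicit Types (P Q : probability R R) (pi : probability (R * R)%type R).

Definition transport_cost pi : \bar R := \int[pi]_z ((z.1 - z.2) ^+ 2)%:E.

Lemma coupling_product P Q : coupling P Q (P \x Q).
Proof.
split => A mA /=.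
  by rewrite -setXT product_measure1E// (_ : _ [set: _] = 1) ?mule1//;
    exact: probability_setT.
by rewrite -setTX product_measure1E// (_ : _ [set: _] = 1) ?mul1e//;
  exact: probability_setT.
Qed.

Lemma measurable_sqr_sub :
  measurable_fun [set: R * R] (fun z : R * R => ((z.1 - z.2) ^+ 2)%:E).
Proof.
apply/measurable_EFinP; apply: measurable_funX.
by apply: measurable_funB; [exact: measurable_fst | exact: measurable_snd].
Qed.

Lemma transport_cost_lt_pinfty {P Q pi} :
  finite_second_moment P -> finite_second_moment Q -> coupling P Q pi ->
  transport_cost pi < +oo.
Proof.
move=> hP hQ [piP piQ].
have msqr : measurable_fun [set: R] (fun x : R => (x ^+ 2)%:E).
  by apply/measurable_EFinP; exact: exprn_measurable.
have m1 : measurable_fun [set: R * R] (fun z => (z.1 ^+ 2)%:E).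
  by apply/measurable_EFinP; apply: measurable_funX; exact: measurable_fst.
have m2 : measurable_fun [set: R * R] (fun z => (z.2 ^+ 2)%:E).
  by apply/measurable_EFinP; apply: measurable_funX; exact: measurable_snd.
have sqr_ge0E (x : R) : 0 <= (x ^+ 2)%:E by rewrite lee_fin sqr_ge0.
pose g z := ((z.1 ^+ 2)%:E + (z.2 ^+ 2)%:E : \bar R).
have intg : \int[pi]_z g z < +oo.
  rewrite ge0_integralD// (ge0_integral_fst_marginal pi piP msqr)//.
  by rewrite (ge0_integral_snd_marginal pi piQ msqr)//; exact: lte_add_pinfty.
have g_ge0 z : [set: R * R] z -> 0 <= g z by rewrite adde_ge0.
have mg : measurable_fun [set: R * R] g by exact: emeasurable_funD.
rewrite /transport_cost; apply: (@le_lt_trans _ _ (\int[pi]_z (g z + g z))).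
  apply: ge0_le_integral => //; first exact: measurable_sqr_sub.
    exact: emeasurable_funD.
  move=> z _; rewrite /g -!EFinD lee_fin.
  by have := sqr_ge0 (z.1 + z.2); nra.
by rewrite ge0_integralD//; exact: lte_add_pinfty.
Qed.

Lemma le_fine_W2sq P Q (x : R) :
  finite_second_moment P -> finite_second_moment Q ->
  (forall pi, coupling P Q pi -> x%:E <= transport_cost pi) ->
  (x <= fine (W2sq P Q))%R.
Proof.
move=> hP hQ xle.
have xW : x%:E <= W2sq P Q by apply/ereal_infP => _ [pi piPQ <-]; exact: xle.
have Wfin : W2sq P Q \is a fin_num.
  rewrite fin_numElt (lt_le_trans (ltNyr x))//=.
  apply: le_lt_trans (transport_cost_lt_pinfty hP hQ (coupling_product P Q)).
  by apply: ereal_inf_lbound; exists (P \x Q)%E => //; exact: coupling_product.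
by rewrite -lee_fin fineK.
Qed.

Lemma distfun_sub_shift_le_W2sq P Q (a e : R) :
  finite_second_moment P -> finite_second_moment Q -> (0 < e)%R ->
  (e ^+ 2 * (distfun P a - distfun Q (a + e)) <= fine (W2sq P Q))%R /\
  (e ^+ 2 * (distfun Q a - distfun P (a + e)) <= fine (W2sq P Q))%R.
Proof.
move=> hP hQ e0; split; apply: le_fine_W2sq => // pi [piP piQ].
  exact: distfun_sub_shift_le measurable_fst measurable_snd piP piQ e0.
rewrite /transport_cost; under eq_integral do rewrite -sqrrN opprB.
exact: distfun_sub_shift_le measurable_snd measurable_fst piQ piP e0.
Qed.

Lemma distfun_eq_W2sq_le0 P Q (t : R) :
  finite_second_moment P -> finite_second_moment Q -> (fine (W2sq P Q) <= 0)%R ->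
  distfun P t = distfun Q t.
Proof.
move=> hP hQ W_le0; apply/eqP; rewrite eq_le.
apply/andP; split; apply: (le_right_continuous (distfun_right_continuous _ t)) => e e0;
  rewrite -subr_le0 -(pmulr_rle0 _ (exprn_gt0 2 e0)); apply: le_trans W_le0.
- exact: (distfun_sub_shift_le_W2sq _ _ t e hP hQ e0).1.
- exact: (distfun_sub_shift_le_W2sq _ _ t e hP hQ e0).2.
Qed.

End wasserstein.

Lemma le_modulus {R : realType} {F : R -> R} {M : R} (z xi : R) :
  (forall x, `|F x| <= M) -> F (z + xi) - F z <= modulus F xi.
Proof.
move=> FM; apply: ub_le_sup; last by exists z.
exists (M + M) => _ [y _ <-]; apply: le_trans (ler_norm _) _.
by apply: le_trans (ler_normB _ _) _; exact: lerD.
Qed.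

Lemma powR_two_thirds_cube (R : realType) (x : R) :
  0 <= x -> (x `^ (2 / 3)) ^+ 3 = x ^+ 2.
Proof.
move=> x0; rewrite -powR_mulrn ?powR_ge0// -powRrM.
by rewrite (_ : 2 / 3 * 3%:R = 2%:R) ?powR_mulrn//; field.
Qed.

Theorem lemma3 (R : realType) (mu muhat : probability R R)
  (hmu : finite_second_moment mu) (hmuhat : finite_second_moment muhat)
  (t : R) :
  let F := distfun mu in
  let Fhat := distfun muhat in
  let gamma := 1 - F t in
  let gammahat := 1 - Fhat t in
  let d := d2 muhat mu in
  `|gammahat - gamma| <= d `^ (2 / 3) + modulus F (d `^ (2 / 3)).
Proof.
cbv zeta; set F := distfun mu; set Fhat := distfun muhat; set d := d2 muhat mu.
have -> : 1 - Fhat t - (1 - F t) = F t - Fhat t by lra.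
have F_bounded x : `|F x| <= 1 by rewrite ger0_norm ?distfun_ge0 ?distfun_le1.
set w := fine (W2sq muhat mu).
have [w_le0 | w_gt0] := leP w 0.
  have -> : d = 0 by apply/eqP; rewrite sqrtr_eq0.
  have -> : F t = Fhat t by apply: esym; exact: distfun_eq_W2sq_le0.
  rewrite subrr normr0 powR0 ?add0r; last by rewrite mulf_neq0 ?invr_eq0.
  by have := le_modulus 0 0 F_bounded; rewrite addr0 subrr.
have gap e a : 0 < e ->
    e ^+ 2 * (Fhat a - F (a + e)) <= w /\ e ^+ 2 * (F a - Fhat (a + e)) <= w.
  exact: distfun_sub_shift_le_W2sq.
have d_gt0 : 0 < d by rewrite sqrtr_gt0.
set e := d `^ (2 / 3).
have e_gt0 : 0 < e by rewrite powR_gt0.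
have e3 : w = e ^+ 2 * e.
  by rewrite -exprSr powR_two_thirds_cube ?sqr_sqrtr// ltW.
have [up _] := gap e t e_gt0.
have [_ low] := gap e (t - e) e_gt0.
rewrite e3 subrK !ler_pM2l ?exprn_gt0// in up low.
have m_up := le_modulus t e F_bounded.
have m_low := le_modulus (t - e) e F_bounded; rewrite subrK in m_low.
rewrite ler_norml; apply/andP; split; lra.
Qed.
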